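(* Let $C_1 \subseteq \mathbb{R}^2$ be convex, let $\mathbf{t} \in \mathbb{R}^2$ be a nonzero vector, and let $C_2 = C_1 + \mathbf{t} = \{x + \mathbf{t} : x \in C_1\}$. Choose Cartesian coordinates whose positive $x$-axis points in the direction of $\mathbf{t}$. If $p \in C_1 \setminus C_2$ and $q \in C_2$ have the same $y$-coordinate, then the $x$-coordinate of $p$ is strictly smaller than that of $q$. Similarly, if $p \in C_2 \setminus C_1$ and $q \in C_1$ have the same $y$-coordinate, then the $x$-coordinate of $p$ is strictly larger than that of $q$. *)

From mathcomp Require Import all_boot all_order all_algebra.
From mathcomp Require Import reals.
Set Implicit Arguments. Unset Strict Implicit. Unset Printing Implicit Defensive.
Import Order.TTheory GRing.Theory Num.Theory.
Local Open Scope ring_scope.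

Definition convex2 {R : realType} (C : R * R -> Prop) : Prop :=
  forall x y : R * R, C x -> C y -> forall l : R, 0 <= l -> l <= 1 ->
    C (l * x.1 + (1 - l) * y.1, l * x.2 + (1 - l) * y.2).

Definition translate2 {R : realType} (C : R * R -> Prop) (t : R * R) : R * R -> Prop :=
  fun z => exists x, C x /\ z = (x.1 + t.1, x.2 + t.2).

Definition norm2 {R : realType} (t : R * R) : R := Num.sqrt (t.1 ^+ 2 + t.2 ^+ 2).

(* Cartesian (orthonormal) coordinates whose positive x-axis points in the
   direction of t (t <> 0), with the y-axis obtained by rotating by +90 degrees. *)
Definition xcoord {R : realType} (t p : R * R) : R :=
  (p.1 * t.1 + p.2 * t.2) / norm2 t.
Definition ycoord {R : realType} (t p : R * R) : R :=
  (t.1 * p.2 - t.2 * p.1) / norm2 t.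

From mathcomp Require Import all_boot all_order all_algebra.
From mathcomp Require Import reals.
From mathcomp Require Import ring lra.
Import Order.TTheory GRing.Theory Num.Theory.
Set Implicit Arguments. Unset Strict Implicit. Unset Printing Implicit Defensive.
Local Open Scope ring_scope.

(* Two points with the same [ycoord] differ by a multiple of [t], and the
   multiple has the sign of the difference of their [xcoord]s.  So if [p] and
   [q] lie on a common line parallel to [t] and the claimed strict inequality
   fails, then [p - t] (first claim) or [p] (second claim) lies on the segment of
   that line joining two points of [C1], and convexity contradicts the
   hypothesis on [p]. *)

Section TranslateConvex.

Variable R : realType.
Implicit Types (C : R * R -> Prop) (a p q t : R * R) (r s u : R).

Definition shift2 a r t : R * R := (a.1 + r * t.1, a.2 + r * t.2).

Lemma shift20 a t : shift2 a 0 t = a.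
Proof. by case: a => a1 a2; rewrite /shift2 !mul0r !addr0. Qed.

Lemma shift2D a r s t : shift2 (shift2 a r t) s t = shift2 a (r + s) t.
Proof. by rewrite /shift2 /=; congr pair; ring. Qed.

Lemma translate2P C t z : translate2 C t z <-> C (shift2 z (-1) t).
Proof.
split=> [[[x1 x2] [Cx ->]] | Cz].
  by rewrite /shift2 /= !mulN1r !addrK.
exists (shift2 z (-1) t); split=> //.
by case: z {Cz} => z1 z2; rewrite /shift2 /= !mulN1r !subrK.
Qed.

Lemma convex2_shift2 C a t r s u : convex2 C ->
  C (shift2 a r t) -> C (shift2 a s t) -> r <= u -> u <= s -> C (shift2 a u t).
Proof.
move=> convC Cr Cs ru us; have [rs | rs] := eqVneq r s.
  by have -> : u = r by lra.
have sr : s - r != 0 by rewrite subr_eq0 eq_sym.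
set l := (s - u) / (s - r).
have l0 : 0 <= l by apply: divr_ge0; lra.
have l1 : l <= 1 by rewrite ler_pdivrMr ?mul1r; lra.
suff <- : (l * (shift2 a r t).1 + (1 - l) * (shift2 a s t).1,
           l * (shift2 a r t).2 + (1 - l) * (shift2 a s t).2) = shift2 a u t
  by exact: convC.
by rewrite /l /shift2 /=; congr pair; field.
Qed.

Lemma norm2_gt0 t : t <> (0, 0) -> 0 < norm2 t.
Proof.
case: t => t1 t2 t0; rewrite sqrtr_gt0 /= lt0r addr_ge0 ?sqr_ge0 // andbT.
rewrite paddr_eq0 ?sqr_ge0 // !sqrf_eq0.
by apply/negP => /andP[/eqP t10 /eqP t20]; apply: t0; rewrite t10 t20.
Qed.

Lemma norm2_sqr t : norm2 t ^+ 2 = t.1 ^+ 2 + t.2 ^+ 2.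
Proof. by rewrite sqr_sqrtr // addr_ge0 ?sqr_ge0. Qed.

Lemma xycoordK t p : t <> (0, 0) ->
  p = ((xcoord t p * t.1 - ycoord t p * t.2) / norm2 t,
       (xcoord t p * t.2 + ycoord t p * t.1) / norm2 t).
Proof.
move=> /norm2_gt0 /lt0r_neq0 N0; have N20 : norm2 t ^+ 2 != 0 by rewrite sqrf_eq0.
rewrite /xcoord /ycoord; case: p => p1 p2 /=.
by congr pair; rewrite -[LHS](mulfK N20) {1}norm2_sqr; field.
Qed.

Lemma ycoord_eq_shift2 t p q : t <> (0, 0) -> ycoord t p = ycoord t q ->
  p = shift2 q ((xcoord t p - xcoord t q) / norm2 t) t.
Proof.
move=> t0 yeq; have N0 := lt0r_neq0 (norm2_gt0 t0).
have := xycoordK q t0; have := xycoordK p t0; rewrite yeq.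
move: (xcoord t p) (xcoord t q) (ycoord t q) => xp xq y -> ->.
by rewrite /shift2 /=; congr pair; field.
Qed.

End TranslateConvex.

Theorem mainTheorem3 (R : realType) (C1 : R * R -> Prop) (t : R * R) :
  convex2 C1 -> t <> (0, 0) ->
  (forall p q : R * R,
     C1 p -> ~ translate2 C1 t p -> translate2 C1 t q ->
     ycoord t p = ycoord t q -> xcoord t p < xcoord t q) /\
  (forall p q : R * R,
     translate2 C1 t p -> ~ C1 p -> C1 q ->
     ycoord t p = ycoord t q -> xcoord t p > xcoord t q).
Proof.
move=> convC t0; have N0 := norm2_gt0 t0.
split=> p q.
- move=> Cp Tp /translate2P Tq /(ycoord_eq_shift2 t0).
  set nu := (_ / _) => pE; rewrite ltNge; apply/negP => le_qp.
  have nu0 : 0 <= nu by rewrite divr_ge0 ?subr_ge0 // ltW.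
  apply: Tp; rewrite translate2P pE shift2D; rewrite pE in Cp.
  apply: (convex2_shift2 convC Tq Cp); lra.
- move=> /translate2P Tp Cp Cq /(ycoord_eq_shift2 t0).
  set nu := (_ / _) => pE; rewrite ltNge; apply/negP => le_pq.
  have nu0 : nu <= 0 by rewrite pmulr_lle0 ?invr_gt0 // subr_le0.
  rewrite pE shift2D in Tp; apply: Cp; rewrite pE.
  rewrite -(shift20 q t) in Cq; apply: (convex2_shift2 convC Tp Cq) => //; lra.
Qed.
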